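(* Let $T:\mathrm{PSym}(3)\to\mathrm{Sym}(3)$ satisfy Axioms (A0.1), (A0.2), (A0.3), (A1) and (A3). Then there exists $c\in\mathbb R$ such that for all $\alpha>0$ $$T\big(\mathrm{diag}(\alpha,\alpha^{-1},1)\big)=c\,\log\mathrm{diag}(\alpha,\alpha^{-1},1)=c\,\mathrm{diag}(\ln\alpha,-\ln\alpha,0).$$
   Context: $\mathrm{Sym}(3)$: real symmetric $3\times3$ matrices; $\mathrm{PSym}(3)$: symmetric positive definite ones; $\mathbb 1$: identity; $\mathrm{O}(3)$: orthogonal group; $\log$ is the principal matrix logarithm $\mathrm{PSym}(3)\to\mathrm{Sym}(3)$; coaxial means commuting. Axiom (A0.1): $T$ continuous. Axiom (A0.2): $T(U)=0$ iff $U=\mathbb 1$. Axiom (A0.3): $T(Q^TUQ)=Q^TT(U)Q$ for all $Q\in\mathrm O(3)$. Axiom (A1): for every $\alpha>0$ there is $s\in\mathbb R$ such that for all $U\in\mathrm{PSym}(3)$: $U=\mathrm{diag}(\alpha,\alpha^{-1},1)$ if and only if $T(U)=\mathrm{diag}(s,-s,0)$. Axiom (A3): $T(U_1U_2)=T(U_1)+T(U_2)$ for all coaxial $U_1,U_2\in\mathrm{PSym}(3)$. *)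

From Stdlib Require Import Reals Lra.
Open Scope R_scope.

Inductive I3 : Type := i0 | i1 | i2.

Definition Mat3 := I3 -> I3 -> R.
Definition Vec3 := I3 -> R.

Definition sum3 (f : I3 -> R) : R := f i0 + f i1 + f i2.

Definition mmul (A B : Mat3) : Mat3 := fun i j => sum3 (fun k => A i k * B k j).
Definition mtr (A : Mat3) : Mat3 := fun i j => A j i.
Definition madd (A B : Mat3) : Mat3 := fun i j => A i j + B i j.
Definition mscale (c : R) (A : Mat3) : Mat3 := fun i j => c * A i j.
Definition mzero : Mat3 := fun _ _ => 0.

Definition diag3 (a b c : R) : Mat3 := fun i j =>
  match i, j with
  | i0, i0 => a
  | i1, i1 => b
  | i2, i2 => c
  | _, _ => 0
  end.

Definition mid : Mat3 := diag3 1 1 1.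

Definition is_sym (A : Mat3) : Prop := forall i j, A i j = A j i.

Definition qform (A : Mat3) (x : Vec3) : R :=
  sum3 (fun i => sum3 (fun j => x i * A i j * x j)).

Definition is_psym (A : Mat3) : Prop :=
  is_sym A /\ forall x : Vec3, (exists i, x i <> 0) -> 0 < qform A x.

Definition is_orth (Q : Mat3) : Prop := mmul (mtr Q) Q = mid.

Definition coaxial (A B : Mat3) : Prop := mmul A B = mmul B A.

Definition cont_on_psym (T : Mat3 -> Mat3) : Prop :=
  forall U, is_psym U -> forall eps, 0 < eps -> exists delta, 0 < delta /\
    forall V, is_psym V -> (forall i j, Rabs (V i j - U i j) < delta) ->
      forall i j, Rabs (T V i j - T U i j) < eps.

(* By (A1), T maps the stretch diag(a, 1/a, 1) to diag(f a, -f a, 0) for some scalar f a.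
   Stretches commute and multiply, so (A3) gives f (a b) = f a + f b, and (A0.1) makes f
   continuous. Hence x |-> f (exp x) is a continuous solution of Cauchy's equation, so it
   is linear and f = c ln. *)
From Stdlib Require Import Reals Lra Lia ZArith FunctionalExtensionality.
Open Scope R_scope.

Definition continuous_at_ed (g : R -> R) (x : R) : Prop :=
  forall eps, 0 < eps -> exists delta, 0 < delta /\
    forall y, Rabs (y - x) < delta -> Rabs (g y - g x) < eps.

Lemma exp_continuous_at_ed x : continuous_at_ed exp x.
Proof.
  intros eps Heps.
  destruct (derivable_continuous _ derivable_exp x eps Heps) as [d [Hd Hexp]].
  exists d; split; [lra|]. intros y Hy.
  destruct (Req_dec y x) as [->|Hyx].
  - rewrite Rminus_diag, Rabs_R0; lra.
  - apply (Hexp y). split; [split; [exact I|congruence]|exact Hy].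
Qed.

Lemma rational_above (x m : R) : 0 < m ->
  exists k n : Z, 0 < IZR n /\ 0 < IZR k / IZR n - x < m.
Proof.
  intros Hm.
  destruct (archimed (/ m)) as [HN _]. set (n := up (/ m)) in HN.
  assert (Hn : 0 < IZR n) by (pose proof (Rinv_0_lt_compat m Hm); lra).
  destruct (archimed (IZR n * x)) as [Hk1 Hk2]. set (k := up (IZR n * x)) in Hk1, Hk2.
  exists k, n. split; [exact Hn|].
  assert (Hdiff : IZR k / IZR n - x = (IZR k - IZR n * x) / IZR n) by (field; lra).
  rewrite Hdiff. split.
  - apply Rdiv_lt_0_compat; lra.
  - apply Rle_lt_trans with (1 / IZR n).
    + apply Rmult_le_compat_r; [apply Rlt_le, Rinv_0_lt_compat|]; lra.
    + apply Rmult_lt_reg_l with (IZR n * / m).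
      * apply Rmult_lt_0_compat; [lra|apply Rinv_0_lt_compat; lra].
      * replace (IZR n * / m * (1 / IZR n)) with (/ m) by (field; lra).
        replace (IZR n * / m * m) with (IZR n) by (field; lra). exact HN.
Qed.

Section Cauchy_equation.
Variable g : R -> R.
Hypothesis g_add : forall x y, g (x + y) = g x + g y.

Lemma additive_0 : g 0 = 0.
Proof. pose proof (g_add 0 0) as H. rewrite Rplus_0_r in H. lra. Qed.

Lemma additive_opp x : g (- x) = - g x.
Proof. pose proof (g_add x (- x)) as H. rewrite Rplus_opp_r, additive_0 in H. lra. Qed.

Lemma additive_nat_mul n x : g (INR n * x) = INR n * g x.
Proof.
  induction n as [|n IHn].
  - rewrite Rmult_0_l, additive_0; simpl; ring.
  - rewrite S_INR, Rmult_plus_distr_r, Rmult_1_l, g_add, IHn; ring.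
Qed.

Lemma additive_int_mul k x : g (IZR k * x) = IZR k * g x.
Proof.
  destruct (Z.le_gt_cases 0 k) as [Hk|Hk].
  - rewrite <- (Z2Nat.id k Hk), <- INR_IZR_INZ. apply additive_nat_mul.
  - replace k with (- Z.of_nat (Z.to_nat (- k)))%Z by lia.
    rewrite opp_IZR, <- INR_IZR_INZ, Ropp_mult_distr_l_reverse, additive_opp,
      additive_nat_mul; ring.
Qed.

Lemma additive_rat k n : IZR n <> 0 -> g (IZR k / IZR n) = g 1 * (IZR k / IZR n).
Proof.
  intros Hn. apply Rmult_eq_reg_l with (IZR n); [|exact Hn].
  rewrite <- additive_int_mul.
  replace (IZR n * (IZR k / IZR n)) with (IZR k * 1) by (field; exact Hn).
  rewrite additive_int_mul. field; exact Hn.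
Qed.

(* Squeeze g x - g 1 * x between the values at a nearby rational, where it vanishes. *)
Lemma additive_continuous_linear x : continuous_at_ed g x -> g x = g 1 * x.
Proof.
  intros Hg.
  assert (Hsmall : forall eps, 0 < eps -> Rabs (g x - g 1 * x) <= 0 + 2 * eps).
  { intros eps Heps.
    destruct (Hg eps Heps) as [d [Hd Hgd]].
    assert (Hc : 0 < Rabs (g 1) + 1) by (pose proof (Rabs_pos (g 1)); lra).
    set (m := Rmin d (eps / (Rabs (g 1) + 1))).
    assert (Hm : 0 < m) by (apply Rmin_glb_lt; [lra|apply Rdiv_lt_0_compat; lra]).
    assert (Hmd : m <= d) by apply Rmin_l.
    assert (Hme : m <= eps / (Rabs (g 1) + 1)) by apply Rmin_r.
    destruct (rational_above x m Hm) as [k [n [Hn [Hr1 Hr2]]]].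
    set (r := IZR k / IZR n) in Hr1, Hr2.
    assert (Hgr : Rabs (g r - g x) < eps).
    { apply Hgd. rewrite Rabs_pos_eq by lra. lra. }
    assert (Hlin : Rabs (g 1 * r - g 1 * x) < eps).
    { rewrite <- Rmult_minus_distr_l, Rabs_mult, (Rabs_pos_eq (r - x)) by lra.
      apply Rle_lt_trans with (Rabs (g 1) * (eps / (Rabs (g 1) + 1))).
      - apply Rmult_le_compat_l; [apply Rabs_pos|lra].
      - apply Rmult_lt_reg_l with (Rabs (g 1) + 1); [exact Hc|].
        replace ((Rabs (g 1) + 1) * (Rabs (g 1) * (eps / (Rabs (g 1) + 1))))
          with (Rabs (g 1) * eps) by (field; lra).
        lra. }
    assert (Hr : g r = g 1 * r) by (apply additive_rat; lra).
    rewrite Hr in Hgr.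
    replace (g x - g 1 * x) with (- (g 1 * r - g x) + (g 1 * r - g 1 * x)) by ring.
    eapply Rle_trans; [apply Rabs_triang|]. rewrite Rabs_Ropp. lra. }
  assert (Hzero : Rabs (g x - g 1 * x) <= 0).
  { apply Rle_plus_epsilon. intros eps Heps.
    replace (0 + eps) with (0 + 2 * (eps / 2)) by field. apply Hsmall; lra. }
  apply Rminus_diag_uniq. destruct (Req_dec (g x - g 1 * x) 0) as [E|E]; [exact E|].
  pose proof (Rabs_pos_lt _ E). lra.
Qed.

End Cauchy_equation.

Lemma diag3_mul a b c a' b' c' :
  mmul (diag3 a b c) (diag3 a' b' c') = diag3 (a * a') (b * b') (c * c').
Proof.
  unfold mmul, sum3, diag3.
  extensionality i; extensionality j; destruct i, j; simpl; ring.
Qed.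

Lemma diag3_coaxial a b c a' b' c' : coaxial (diag3 a b c) (diag3 a' b' c').
Proof. unfold coaxial. rewrite !diag3_mul. f_equal; ring. Qed.

Lemma diag3_psym a b c : 0 < a -> 0 < b -> 0 < c -> is_psym (diag3 a b c).
Proof.
  intros Ha Hb Hc. split.
  - intros i j; destruct i, j; reflexivity.
  - intros x [i Hi]. unfold qform, sum3, diag3; simpl.
    assert (Hsq : 0 < x i * x i) by (apply Rsqr_pos_lt; exact Hi).
    assert (0 <= x i0 * x i0) by nra. assert (0 <= x i1 * x i1) by nra.
    assert (0 <= x i2 * x i2) by nra.
    destruct i; nra.
Qed.

Definition stretch (a : R) : Mat3 := diag3 a (/ a) 1.

Lemma stretch_psym a : 0 < a -> is_psym (stretch a).
Proof.
  intros Ha. apply diag3_psym; [exact Ha|apply Rinv_0_lt_compat; exact Ha|lra].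
Qed.

Lemma stretch_mul a b : 0 < a -> 0 < b -> mmul (stretch a) (stretch b) = stretch (a * b).
Proof.
  intros Ha Hb. unfold stretch. rewrite diag3_mul, Rinv_mult, Rmult_1_r. reflexivity.
Qed.

Section Stretch_response.
Variable T : Mat3 -> Mat3.
Hypothesis T_cont : cont_on_psym T.
Hypothesis T_stretch : forall alpha, 0 < alpha -> exists s : R, forall U, is_psym U ->
  (U = diag3 alpha (/ alpha) 1 <-> T U = diag3 s (- s) 0).
Hypothesis T_coaxial : forall U1 U2, is_psym U1 -> is_psym U2 -> coaxial U1 U2 ->
  T (mmul U1 U2) = madd (T U1) (T U2).

Definition stretch_amplitude (a : R) : R := T (stretch a) i0 i0.

Lemma T_stretch_diag a : 0 < a ->
  T (stretch a) = diag3 (stretch_amplitude a) (- stretch_amplitude a) 0.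
Proof.
  intros Ha. destruct (T_stretch a Ha) as [s Hs].
  assert (E : T (stretch a) = diag3 s (- s) 0) by (apply Hs; [apply stretch_psym|]; easy).
  unfold stretch_amplitude. rewrite E. reflexivity.
Qed.

Lemma stretch_amplitude_mul a b : 0 < a -> 0 < b ->
  stretch_amplitude (a * b) = stretch_amplitude a + stretch_amplitude b.
Proof.
  intros Ha Hb. unfold stretch_amplitude.
  rewrite <- stretch_mul, T_coaxial; try easy.
  - apply stretch_psym, Ha.
  - apply stretch_psym, Hb.
  - apply diag3_coaxial.
Qed.

Lemma stretch_amplitude_exp_continuous x :
  continuous_at_ed (fun y => stretch_amplitude (exp y)) x.
Proof.
  intros eps Heps.
  destruct (T_cont (stretch (exp x)) (stretch_psym _ (exp_pos x)) eps Heps)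
    as [d [Hd HT]].
  destruct (exp_continuous_at_ed x d Hd) as [d1 [Hd1 Hexp1]].
  destruct (exp_continuous_at_ed (- x) d Hd) as [d2 [Hd2 Hexp2]].
  exists (Rmin d1 d2). split; [apply Rmin_glb_lt; lra|].
  intros y Hy. pose proof (Rmin_l d1 d2). pose proof (Rmin_r d1 d2).
  apply HT; [apply stretch_psym, exp_pos|].
  intros i j; destruct i, j; unfold stretch, diag3;
    try (rewrite Rminus_diag, Rabs_R0; lra).
  - apply Hexp1; lra.
  - rewrite <- !exp_Ropp. apply Hexp2.
    replace (- y - - x) with (- (y - x)) by ring. rewrite Rabs_Ropp; lra.
Qed.

Lemma stretch_amplitude_ln a : 0 < a ->
  stretch_amplitude a = stretch_amplitude (exp 1) * ln a.
Proof.
  intros Ha. rewrite <- (exp_ln a Ha) at 1.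
  apply (additive_continuous_linear (fun y => stretch_amplitude (exp y))).
  - intros x y. rewrite exp_plus. apply stretch_amplitude_mul; apply exp_pos.
  - apply stretch_amplitude_exp_continuous.
Qed.

End Stretch_response.

Theorem mainTheorem5 (T : Mat3 -> Mat3)
  (HSym : forall U, is_psym U -> is_sym (T U))
  (A01 : cont_on_psym T)
  (A02 : forall U, is_psym U -> (T U = mzero <-> U = mid))
  (A03 : forall Q U, is_orth Q -> is_psym U ->
           T (mmul (mtr Q) (mmul U Q)) = mmul (mtr Q) (mmul (T U) Q))
  (A1 : forall alpha, 0 < alpha -> exists s : R, forall U, is_psym U ->
           (U = diag3 alpha (/ alpha) 1 <-> T U = diag3 s (- s) 0))
  (A3 : forall U1 U2, is_psym U1 -> is_psym U2 -> coaxial U1 U2 ->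
           T (mmul U1 U2) = madd (T U1) (T U2)) :
  exists c : R, forall alpha, 0 < alpha ->
    T (diag3 alpha (/ alpha) 1) = mscale c (diag3 (ln alpha) (- ln alpha) 0).
Proof.
  exists (stretch_amplitude T (exp 1)). intros a Ha.
  change (diag3 a (/ a) 1) with (stretch a).
  rewrite (T_stretch_diag T A1 a Ha), (stretch_amplitude_ln T A01 A3 a Ha).
  unfold mscale, diag3. extensionality i; extensionality j; destruct i, j; ring.
Qed.
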